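(* Let $A$ be a set with a ternary operation $p\colon A^3\to A$ and two constants $0,1\in A$ satisfying, for all $a,b,c,b_1,b_2,b_3\in A$: (T1) $p(0,a,1)=a$; (T2) $p(a,b,a)=a$; (T3) $p(a,p(b_1,b_2,b_3),c)=p(p(a,b_1,c),b_2,p(a,b_3,c))$; (T4) $p(a,0,b)=a=p(b,1,a)$. Define $\bar{a}=p(1,a,0)$, $a\cdot b=p(0,a,b)$ and $a+b=p(a,b,\bar a)$. Then the following conditions are equivalent: (i) $(A,+,\cdot,0,1)$ is a unitary ring of characteristic $2$; (ii) $p(a,b,c)=(\bar b\cdot a)+(b\cdot c)$ for all $a,b,c\in A$; (iii) $a\cdot(b+c)=(a\cdot b)+(a\cdot c)$ for all $a,b,c\in A$.
   Context: A unitary ring of characteristic $2$ here means an associative ring with additive identity $0$ and multiplicative identity $1$ (not necessarily commutative) such that $b+b=0$ for all elements $b$. *)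

Section Ops.
Variables (A : Type) (p : A -> A -> A -> A) (zero one : A).

Definition pbar (a : A) : A := p one a zero.
Definition pmul (a b : A) : A := p zero a b.
Definition padd (a b : A) : A := p a b (pbar a).
End Ops.

Definition is_unitary_ring_char2 {A : Type} (add mul : A -> A -> A) (zero one : A) : Prop :=
  (forall a b c, add a (add b c) = add (add a b) c) /\
  (forall a b, add a b = add b a) /\
  (forall a, add zero a = a) /\
  (forall a, exists b, add a b = zero) /\
  (forall a b c, mul a (mul b c) = mul (mul a b) c) /\
  (forall a, mul one a = a) /\
  (forall a, mul a one = a) /\
  (forall a b c, mul a (add b c) = add (mul a b) (mul a c)) /\
  (forall a b c, mul (add a b) c = add (mul a c) (mul b c)) /\
  (forall b, add b b = zero).


(* Axiom (T3) says that each map [p a _ c] preserves [p]; with (T1) and (T4)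
   this yields associativity of [+] and [.], the units, and the
   two identities [a + x.d = p(a, x, a + d)] and [bar x . a = p(a, x, 0)].
   Both (ii) (at [(1, y, 1)]) and (iii) (at [(y, 1, 1)]) force [y + y = 0]; in
   characteristic 2 the first identity reads [p(a, b, c) = a + b.(a + c)], so
   (ii) is literally left distributivity, and right distributivity holds
   outright. *)

Section TernaryRing.

Variables (A : Type) (p : A -> A -> A -> A) (zero one : A).

Hypothesis p_zero_one : forall a, p zero a one = a.
Hypothesis p_idem : forall a b, p a b a = a.
Hypothesis p_distr :
  forall a b1 b2 b3 c, p a (p b1 b2 b3) c = p (p a b1 c) b2 (p a b3 c).
Hypothesis p_mid0 : forall a b, p a zero b = a.
Hypothesis p_mid1 : forall a b, p b one a = a.

Local Notation bar := (pbar A p zero one).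
Local Notation mul := (pmul A p zero).
Local Notation add := (padd A p zero one).

Lemma pbarK y : bar (bar y) = y.
Proof. unfold pbar. rewrite p_distr, p_mid0, p_mid1. apply p_zero_one. Qed.

Lemma p_bar_m a y c : p a (bar y) c = p c y a.
Proof. unfold pbar. rewrite p_distr, p_mid0, p_mid1. reflexivity. Qed.

Lemma pmul_bar x a : mul (bar x) a = p a x zero.
Proof. unfold pmul, pbar. rewrite p_distr, p_mid0, p_mid1. reflexivity. Qed.

Lemma pbar0 : bar zero = one.
Proof. apply p_mid0. Qed.

Lemma pbar1 : bar one = zero.
Proof. apply p_mid1. Qed.

Lemma pbar_add a b : bar (add a b) = add a (bar b).
Proof.
  unfold padd at 1. unfold pbar at 1. rewrite p_distr.
  fold (pbar A p zero one (bar a)). fold (pbar A p zero one a). rewrite pbarK.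
  unfold padd. rewrite p_bar_m. reflexivity.
Qed.

Lemma paddA a b c : add a (add b c) = add (add a b) c.
Proof.
  unfold padd at 1 2. rewrite p_distr.
  fold (padd A p zero one a b). fold (padd A p zero one a (bar b)).
  rewrite <- pbar_add. reflexivity.
Qed.

Lemma padd0l c : add zero c = c.
Proof. unfold padd. rewrite pbar0. apply p_zero_one. Qed.

Lemma padd0r c : add c zero = c.
Proof. apply p_mid0. Qed.

Lemma padd1l x : add one x = bar x.
Proof. unfold padd. rewrite pbar1. reflexivity. Qed.

Lemma padd_mul a x d : add a (mul x d) = p a x (add a d).
Proof. unfold padd at 1, pmul. rewrite p_distr, p_mid0. reflexivity. Qed.

Lemma pmulA a b c : mul a (mul b c) = mul (mul a b) c.
Proof. unfold pmul. rewrite p_distr, p_mid0. reflexivity. Qed.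

Lemma pmul1l a : mul one a = a.
Proof. apply p_mid1. Qed.

Lemma pmul1r a : mul a one = a.
Proof. apply p_zero_one. Qed.

Lemma padd_diag_of_pmulDr :
  (forall a b c, mul a (add b c) = add (mul a b) (mul a c)) ->
  forall y, add y y = zero.
Proof.
  intros distr y.
  rewrite <- (pmul1r y), <- distr. unfold padd. rewrite pbar1, p_mid1.
  apply p_idem.
Qed.

Lemma padd_diag_of_p_decomp :
  (forall a b c, p a b c = add (mul (bar b) a) (mul b c)) ->
  forall y, add y y = zero.
Proof.
  intros decomp y.
  assert (bar_add_id : add (bar y) y = one).
  { pose proof (decomp one y one) as H. rewrite p_idem, !pmul1r in H.
    symmetry. exact H. }
  rewrite <- padd1l, <- paddA in bar_add_id.
  rewrite <- (pbarK (add y y)), <- !padd1l, bar_add_id.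
  rewrite padd1l. apply pbar1.
Qed.

Section Char2.

Hypothesis padd_diag : forall y, add y y = zero.

Lemma paddKl a b : add a (add a b) = b.
Proof. rewrite paddA, padd_diag. apply padd0l. Qed.

Lemma paddC a b : add a b = add b a.
Proof.
  assert (sum_zero : add (add a b) (add b a) = zero).
  { rewrite <- paddA, (paddA b b a), padd_diag, padd0l. apply padd_diag. }
  rewrite <- (paddKl (add a b) (add b a)), sum_zero, padd0r. reflexivity.
Qed.

Lemma p_expand a x c : p a x c = add a (mul x (add a c)).
Proof. rewrite padd_mul, paddKl. reflexivity. Qed.

Lemma pmul_bar_add x a : mul (bar x) a = add a (mul x a).
Proof. rewrite pmul_bar, padd_mul, padd_diag. reflexivity. Qed.

Lemma pmulDl a b c : mul (add a b) c = add (mul a c) (mul b c).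
Proof.
  unfold padd at 1. unfold pmul at 1. rewrite p_distr.
  fold (pmul A p zero a c). fold (pmul A p zero (bar a) c).
  rewrite p_expand, pmul_bar_add, (paddC c), paddKl. reflexivity.
Qed.

(* By [p_expand], the decomposition (ii) differs from [mul b (add a c)] only by
   the summand [a] added on both sides. *)
Lemma p_decomp_iff_pmulDr_char2 :
  (forall a b c, p a b c = add (mul (bar b) a) (mul b c)) <->
  (forall a b c, mul a (add b c) = add (mul a b) (mul a c)).
Proof.
  split; intros H x a c.
  - specialize (H a x c). rewrite p_expand, pmul_bar_add, <- paddA in H.
    rewrite <- (paddKl a (mul x (add a c))), H. apply paddKl.
  - rewrite p_expand, H, paddA, pmul_bar_add. reflexivity.
Qed.

Lemma unitary_ring_char2_of_pmulDr :
  (forall a b c, mul a (add b c) = add (mul a b) (mul a c)) ->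
  is_unitary_ring_char2 add mul zero one.
Proof.
  intros distr.
  repeat split; auto using paddA, paddC, padd0l, pmulA, pmul1l, pmul1r, pmulDl.
  intros a. exists a. apply padd_diag.
Qed.

End Char2.

Lemma p_decomp_iff_pmulDr :
  (forall a b c, p a b c = add (mul (bar b) a) (mul b c)) <->
  (forall a b c, mul a (add b c) = add (mul a b) (mul a c)).
Proof.
  split; intro H; apply p_decomp_iff_pmulDr_char2;
    eauto using padd_diag_of_p_decomp, padd_diag_of_pmulDr.
Qed.

End TernaryRing.

Theorem theorem2 (A : Type) (p : A -> A -> A -> A) (zero one : A)
  (T1 : forall a, p zero a one = a)
  (T2 : forall a b, p a b a = a)
  (T3 : forall a b1 b2 b3 c,
      p a (p b1 b2 b3) c = p (p a b1 c) b2 (p a b3 c))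
  (T4 : forall a b, p a zero b = a /\ p b one a = a) :
  let bar := @pbar A p zero one in
  let mul := @pmul A p zero in
  let add := @padd A p zero one in
  (is_unitary_ring_char2 add mul zero one <->
     (forall a b c, p a b c = add (mul (bar b) a) (mul b c))) /\
  ((forall a b c, p a b c = add (mul (bar b) a) (mul b c)) <->
     (forall a b c, mul a (add b c) = add (mul a b) (mul a c))).
Proof.
  cbv zeta.
  pose proof (fun a b => proj1 (T4 a b)) as T4l.
  pose proof (fun a b => proj2 (T4 a b)) as T4r.
  pose proof (p_decomp_iff_pmulDr A p zero one T1 T2 T3 T4l T4r) as ii_iii.
  split; [split | exact ii_iii].
  - intros (_ & _ & _ & _ & _ & _ & _ & distr & _). apply ii_iii, distr.
  - intro decomp. pose proof (proj1 ii_iii decomp) as distr.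
    eauto using unitary_ring_char2_of_pmulDr, padd_diag_of_pmulDr.
Qed.
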